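(* Let $\ell\ge 1$ and $k$ be integers with $k>2\ell+2$. Let $G_k$, $r$, $s_1,s_2,t_1,t_2$ and $Z$ be as defined in the context, and let $G$ be obtained from $G_k$ by replacing each edge of $G_k$ that has at least one end in $Z$ by a path of length more than $2\ell$ (the lengths of these paths may differ; their internal vertices are new). Let $S=\{r,s_1,s_2\}$ and $T=\{r,t_1,t_2\}$. Then for every $X\subseteq V(G)$ with $|X|\le 2$, there is a path $P$ of $G$ between $S$ and $T$ such that $d(X,P)>\ell$.
   Context: For an integer $k\ge 2$, let $B$ be a uniform binary tree of depth $k$: a rooted tree with root $r$ and $2^k-1$ vertices, in which every non-leaf vertex has exactly two children (a left child and a right child), and every path from the root to a leaf has exactly $k-1$ edges. Draw $B$ in the plane in the usual way, and let $p_1,\dots,p_m$ ($m=2^{k-2}$) be the vertices at distance $k-2$ from $r$, in left-to-right order. Let $\lambda_i,\rho_i$ be the left and right children (leaves) of $p_i$. Add two new vertices $s_2,t_1$, and let $Z$ be the set of leaves of $B$ together with $s_2,t_1$. Add a path $M$ with vertex set $Z$ whose vertices in order are $$\lambda_1,\ s_2,\ \lambda_2,\ \rho_1,\ \lambda_3,\ \rho_2,\ \dots,\ \lambda_m,\ \rho_{m-1},\ t_1,\ \rho_m .$$ The resulting graph $B\cup M$ is $G_k$. Set $s_1=\lambda_1$ and $t_2=\rho_m$ (the ends of $M$), so $s_2,t_1$ are the neighbours in $M$ of $s_1,t_2$ respectively. A path between $S$ and $T$ is a path with one end in $S$ and the other in $T$ (a one-vertex path on a vertex of $S\cap T$ counts).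 For sets of vertices or subgraphs $X,Y$, $d(X,Y)$ is the number of edges of a shortest path with one end in $X$ and the other in $Y$ (infinite if there is none). *)

From mathcomp Require Import all_boot.
Set Implicit Arguments. Unset Strict Implicit. Unset Printing Implicit Defensive.

(* ---------- The graph G_k ----------
   Tree B (depth k) in heap numbering: root r = 1, children of u are 2u, 2u+1;
   vertices 1 .. 2^k - 1; leaves 2^(k-1) .. 2^k - 1.
   p_i = 2^(k-2) + i - 1 (i = 1..m, m = 2^(k-2)), lambda_i = 2 p_i, rho_i = 2 p_i + 1.
   New vertices s2 = 2^k, t1 = 2^k + 1. *)

Definition mB (k : nat) : nat := 2 ^ (k - 2).
Definition pB (k i : nat) : nat := 2 ^ (k - 2) + i - 1.
Definition lamB (k i : nat) : nat := 2 * pB k i.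
Definition rhoB (k i : nat) : nat := (2 * pB k i).+1.
Definition rootB : nat := 1.
Definition s2B (k : nat) : nat := 2 ^ k.
Definition t1B (k : nat) : nat := (2 ^ k).+1.
Definition s1B (k : nat) : nat := lamB k 1.
Definition t2B (k : nat) : nat := rhoB k (mB k).

(* vertex sequence of the path M:
   lambda_1, s2, lambda_2, rho_1, lambda_3, rho_2, ..., lambda_m, rho_(m-1), t1, rho_m *)
Definition Mseq (k : nat) : seq nat :=
  [:: lamB k 1; s2B k]
  ++ flatten [seq [:: lamB k i.+1; rhoB k i] | i <- iota 1 (mB k - 1)]
  ++ [:: t1B k; rhoB k (mB k)].

(* Edges of G_k with at least one end in Z: the tree edges p_i lambda_i, p_i rho_i,
   and all edges of M. *)
Definition zedges (k : nat) : seq (nat * nat) :=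
  [seq (pB k i, lamB k i) | i <- iota 1 (mB k)]
  ++ [seq (pB k i, rhoB k i) | i <- iota 1 (mB k)]
  ++ zip (Mseq k) (behead (Mseq k)).

(* ---------- The subdivided graph G ----------
   Edge number j of zedges k is replaced by a path of length L j.
   Vertices: inl v for an original vertex v (1 <= v <= 2^k + 1);
             inr (j, i) for the i-th internal vertex (0 < i < L j) of the j-th path. *)
Definition vtx := (nat + (nat * nat))%type.

Definition inG (k : nat) (L : nat -> nat) (x : vtx) : Prop :=
  match x with
  | inl v => 1 <= v <= (2 ^ k).+1
  | inr (j, i) => j < size (zedges k) /\ 0 < i < L j
  end.

Definition sv (k : nat) (L : nat -> nat) (j i : nat) : vtx :=
  let e := nth (0, 0) (zedges k) j in
  if i == 0 then inl e.1 else if i == L j then inl e.2 else inr (j, i).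

Definition arcG (k : nat) (L : nat -> nat) (x y : vtx) : Prop :=
  (* tree edges with no end in Z (kept unchanged): parent u with u < 2^(k-2) *)
  (exists u, 1 <= u < 2 ^ (k - 2) /\ x = inl u /\ (y = inl (2 * u) \/ y = inl (2 * u).+1))
  \/
  (exists j i, j < size (zedges k) /\ i < L j /\ x = sv k L j i /\ y = sv k L j i.+1).

Definition adjG (k : nat) (L : nat -> nat) (x y : vtx) : Prop :=
  arcG k L x y \/ arcG k L y x.

Fixpoint walkG (k : nat) (L : nat -> nat) (x : vtx) (s : seq vtx) : Prop :=
  match s with
  | [::] => True
  | y :: s' => adjG k L x y /\ walkG k L y s'
  end.

Definition is_pathG (k : nat) (L : nat -> nat) (P : seq vtx) : Prop :=
  match P with
  | [::] => False
  | x :: s => uniq P /\ (forall v, v \in P -> inG k L v) /\ walkG k L x s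
  end.

Definition first (P : seq vtx) : vtx := head (inl 0) P.
Definition final (P : seq vtx) : vtx := last (inl 0) P.

Definition path_between (A B : seq vtx) (P : seq vtx) : Prop :=
  (first P \in A /\ final P \in B) \/ (first P \in B /\ final P \in A).

(* d(X, P) > l : every path of G with one end in X and the other in V(P)
   has more than l edges (so d = infinity when there is none). *)
Definition dist_gt (k : nat) (L : nat -> nat) (X P : seq vtx) (l : nat) : Prop :=
  forall Q, is_pathG k L Q -> path_between X P Q -> l < (size Q).-1.

Definition Sset (k : nat) : seq vtx := [:: inl rootB; inl (s1B k); inl (s2B k)].
Definition Tset (k : nat) : seq vtx := [:: inl rootB; inl (t1B k); inl (t2B k)].

(* Distances are bounded below by 1-Lipschitz potentials: if F changes by at most 1 along
   every edge and |F w - F v| > l for all w in X and v in P, then d(X, P) > l.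
   If every vertex of X has depth more than l in B, the one-vertex path r does it. Otherwise
   some x in X has depth at most l, and P is routed through subdivided edges only, all at depth
   k - 2 > 2l, hence far from x; it remains to keep P far from the other vertex y of X.
   If y lies in B, or on a subdivided edge p_i lambda_i or p_i rho_i far from its leaf, take M
   from s2 to t1. If y lies within l of a vertex z of Z, take an S-T path using no edge at z:
   M from s2 to t1 when z is s1 or t2, and otherwise M from s1 to lambda_c, then
   lambda_c p_c rho_c, then M from rho_c to t2, which skips the two vertices of M strictly
   between lambda_c and rho_c. If y is in the middle of a subdivided edge of M, avoid one of
   its ends in the same way. *)

From mathcomp Require Import all_boot zify.
Set Implicit Arguments. Unset Strict Implicit. Unset Printing Implicit Defensive.

Definition within1 (a b : nat) : Prop := a <= b.+1 /\ b <= a.+1.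

Section Walks.
Variables (T : Type) (e : T -> T -> Prop).

Fixpoint walk (x : T) (s : seq T) : Prop :=
  if s is y :: s' then e x y /\ walk y s' else True.

Lemma walk_cat x s1 s2 : walk x (s1 ++ s2) <-> walk x s1 /\ walk (last x s1) s2.
Proof. by elim: s1 x => [|y s1 IH] x /=; [tauto | rewrite IH; tauto]. Qed.

Definition lipschitz (F : T -> nat) : Prop := forall x y, e x y -> within1 (F x) (F y).

Lemma lipschitz_walk F x s : lipschitz F -> walk x s ->
  F x <= F (last x s) + size s /\ F (last x s) <= F x + size s.
Proof.
move=> HF; elim: s x => [|y s IH] x /=; first lia.
by case=> /HF [H1 H2] /IH; lia.
Qed.

End Walks.

Lemma lipschitz_symcl (T : Type) (e : T -> T -> Prop) F :
  lipschitz e F -> lipschitz (fun x y => e x y \/ e y x) F.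
Proof. by move=> HF x y [/HF | /HF]; rewrite /within1; lia. Qed.

Lemma walk_shorten (T : eqType) (e : T -> T -> Prop) x s : walk e x s ->
  exists s', [/\ walk e x s', uniq (x :: s'), last x s' = last x s & {subset s' <= s}].
Proof.
elim: s x => [|y s IH] x /=; first by exists [::].
case=> exy /IH [s1 [W1 U1 L1 S1]].
have St : {subset y :: s1 <= y :: s}.
  by move=> v; rewrite !inE => /orP [-> // | /S1 ->]; rewrite orbT.
have [Wt Lt] : walk e x (y :: s1) /\ last x (y :: s1) = last y s by [].
move: (y :: s1) Wt U1 St Lt => t Wt Ut St Lt.
have [Hx|Hx] := boolP (x \in t); last by exists t; rewrite /= Hx Ut.
move: Wt Ut St Lt; case/splitPr: Hx => p1 p2.
rewrite walk_cat cat_uniq last_cat => -[_ /= [_ W2]] /and3P [_ _ U2] St Lt.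
exists p2; split=> // v Hv; apply: St; by rewrite mem_cat inE Hv !orbT.
Qed.

Lemma walkGE k L : walkG k L =2 walk (adjG k L).
Proof. by move=> x s; elim: s x => //= y s IH x; rewrite IH. Qed.

Lemma lipschitz_dist_gt k L (F : vtx -> nat) X P l : lipschitz (arcG k L) F ->
  (forall w v, w \in X -> v \in P -> l + F v < F w \/ l + F w < F v) ->
  dist_gt k L X P l.
Proof.
move=> /lipschitz_symcl HF Hsep [|x s] // [_ [_]].
rewrite walkGE => /(lipschitz_walk HF); rewrite /path_between /first /final /vtx /=.
by move=> [H1 H2] [[Hw Hv]|[Hv Hw]]; have := Hsep _ _ Hw Hv; lia.
Qed.

Lemma dist_gt_mem k L X P l :
  (forall w, w \in X -> dist_gt k L [:: w] P l) -> dist_gt k L X P l.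
Proof.
by move=> H Q HQ [[Hw Hv]|[Hv Hw]]; apply: (H _ Hw) => //; [left | right];
  rewrite mem_seq1 eqxx.
Qed.

Lemma size2_subset_pair (T : eqType) (X : seq T) w : size X <= 2 -> w \in X ->
  exists2 y, y \in X & {subset X <= [:: w; y]}.
Proof.
case: X => [|a [|b []]] //= _.
  by rewrite inE => /eqP ->; exists a => [|v]; rewrite !inE // => ->.
rewrite !inE => /orP [] /eqP ->.
- by exists b => //; rewrite !inE eqxx orbT.
- by exists a => [|v]; rewrite !inE ?eqxx // orbC.
Qed.

Lemma mB_gt0 k : 0 < mB k.
Proof. by rewrite expn_gt0. Qed.

Lemma expn_mB k : 2 <= k -> 2 ^ k = 4 * mB k.
Proof. by move=> Hk; rewrite /mB -{1}(subnKC Hk) expnD. Qed.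

Lemma size_flatten_pairs (A B : nat -> nat) a n :
  size (flatten [seq [:: A i; B i] | i <- iota a n]) = n.*2.
Proof. by elim: n a => [|n IH] a //=; rewrite IH doubleS. Qed.

Lemma nth_flatten_pairs (A B : nat -> nat) a n t : t < n.*2 ->
  nth 0 (flatten [seq [:: A i; B i] | i <- iota a n]) t
  = if odd t then B (a + t./2) else A (a + t./2).
Proof.
elim: n a t => [|n IH] a [|[|t]] //= Ht; rewrite ?addn0 //.
by rewrite IH ?negbK ?addSnnS //; rewrite doubleS !ltnS in Ht.
Qed.

(* The q-th vertex of M, where m = mB k: lambda_(j+1) = 2m + 2j sits at q = 2j and
   rho_(j+1) = 2m + 2j + 1 at q = 2j + 3, while s2 = 4m and t1 = 4m + 1 sit at q = 1 and q = 2m. *)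
Definition Mvtx (m q : nat) : nat :=
  if q == 1 then 4 * m else if q == 2 * m then (4 * m).+1
  else if odd q then 2 * m + q - 2 else 2 * m + q.

Lemma nth_Mseq k q : 2 <= k -> q < 2 * mB k + 2 -> nth 0 (Mseq k) q = Mvtx (mB k) q.
Proof.
move=> Hk Hq; have Hm := mB_gt0 k.
rewrite /Mseq /Mvtx /s2B /t1B /lamB /rhoB /pB -/(mB k) expn_mB //.
case: q Hq => [|[|q]] Hq /=; [by case: ifP; lia | by [] |].
have := odd_double_half q; rewrite negbK nth_cat size_flatten_pairs.
case: ltnP => Hq2.
  by rewrite nth_flatten_pairs //; case: (odd q) => /= Hq3; case: eqP; lia.
have: q - (mB k - 1).*2 < 2 by lia.
by case Hd: (q - _) => [|[|]] //= _; case: (odd q) => /= Hq3; case: eqP; lia.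
Qed.

Lemma size_Mseq k : size (Mseq k) = 2 * mB k + 2.
Proof. by rewrite /Mseq size_cat /= size_cat size_flatten_pairs /=; have := mB_gt0 k; lia. Qed.

Lemma Mvtx_range m q : 0 < m -> q < 2 * m + 2 -> 2 * m <= Mvtx m q <= (4 * m).+1.
Proof.
move=> Hm Hq; have := odd_double_half q; rewrite /Mvtx.
by case: (odd q) => /= ?; repeat case: eqP => ?; lia.
Qed.

Lemma eq_Mvtx m q r : 0 < m -> q < 2 * m + 2 -> r < 2 * m + 2 ->
  (Mvtx m q == Mvtx m r) = (q == r).
Proof.
move=> Hm Hq Hr; apply/eqP/eqP => [|-> //].
have := odd_double_half q; have := odd_double_half r; rewrite /Mvtx.
by case: (odd q); case: (odd r) => /= ? ?; repeat case: eqP => ?; lia.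
Qed.

Lemma Mvtx_lam k j : j < mB k -> Mvtx (mB k) (2 * j) = lamB k j.+1.
Proof.
move=> Hj; rewrite /Mvtx /lamB /pB -/(mB k) oddM /=.
by repeat case: eqP => ?; lia.
Qed.

Lemma Mvtx_rho k j : j < mB k -> Mvtx (mB k) (2 * j + 3) = rhoB k j.+1.
Proof.
move=> Hj; rewrite /Mvtx /rhoB /pB -/(mB k) oddD oddM /=.
by repeat case: eqP => ?; lia.
Qed.

Lemma Mvtx_ends k : 2 <= k ->
  [/\ Mvtx (mB k) 0 = s1B k, Mvtx (mB k) 1 = s2B k,
      Mvtx (mB k) (2 * mB k) = t1B k & Mvtx (mB k) (2 * mB k).+1 = t2B k].
Proof.
move=> Hk; have Hm := mB_gt0 k; split.
- exact: (Mvtx_lam Hm).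
- by rewrite /Mvtx /s2B expn_mB.
- by rewrite /Mvtx /t1B expn_mB // ifF ?eqxx //; apply/eqP; lia.
- rewrite /t2B -(prednK Hm) -Mvtx_rho ?prednK //; congr Mvtx; lia.
Qed.

Lemma Mvtx_onto m z : 0 < m -> 2 * m <= z <= (4 * m).+1 ->
  exists2 q, q < 2 * m + 2 & Mvtx m q = z.
Proof.
move=> Hm Hz; set s := [seq Mvtx m q | q <- iota 0 (2 * m + 2)].
have Us : uniq s.
  rewrite map_inj_in_uniq ?iota_uniq // => q r; rewrite !mem_iota => Hq Hr /eqP.
  by rewrite eq_Mvtx; [move/eqP | lia..].
have Ss : {subset s <= iota (2 * m) (2 * m + 2)}.
  move=> x /mapP [q]; rewrite !mem_iota => Hq ->.
  by have := @Mvtx_range m q Hm; lia.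
have Hsz : size (iota (2 * m) (2 * m + 2)) <= size s by rewrite size_map !size_iota.
have [_ Es] := uniq_min_size Us Ss Hsz.
have : z \in s by rewrite Es mem_iota; lia.
by case/mapP=> q; rewrite mem_iota => Hq ->; exists q.
Qed.

Definition zedge (k j : nat) : nat * nat := nth (0, 0) (zedges k) j.

Lemma size_zedges k : size (zedges k) = 4 * mB k + 1.
Proof.
rewrite /zedges !size_cat !size_map size_iota size_zip size_behead size_Mseq; lia.
Qed.

Lemma zedge_lam k j : j < mB k -> zedge k j = (pB k j.+1, lamB k j.+1).
Proof.
move=> Hj; rewrite /zedge /zedges nth_cat size_map size_iota Hj.
by rewrite (nth_map 0) ?size_iota // nth_iota.
Qed.

Lemma zedge_rho k j : j < mB k -> zedge k (mB k + j) = (pB k j.+1, rhoB k j.+1).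
Proof.
move=> Hj; rewrite /zedge /zedges nth_cat size_map size_iota ifF; last lia.
rewrite nth_cat size_map size_iota addKn Hj.
by rewrite (nth_map 0) ?size_iota // nth_iota.
Qed.

Lemma zedge_M k q : 2 <= k -> q <= 2 * mB k ->
  zedge k (2 * mB k + q) = (Mvtx (mB k) q, Mvtx (mB k) q.+1).
Proof.
move=> Hk Hq; rewrite /zedge /zedges !nth_cat !size_map !size_iota !ifF; try lia.
rewrite nth_zip_cond size_zip size_behead size_Mseq nth_behead ifT; last lia.
have -> : 2 * mB k + q - mB k - mB k = q by lia.
by rewrite !nth_Mseq //; lia.
Qed.

Lemma zedge_chord k j : j < 2 * mB k ->
  mB k <= (zedge k j).1 < 2 * mB k /\ 2 * mB k <= (zedge k j).2 < 4 * mB k.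
Proof.
case: (ltnP j (mB k)) => [Hj _ | Hj2 Hj].
  by rewrite zedge_lam //= /lamB /pB -/(mB k); lia.
by rewrite -(subnKC Hj2) zedge_rho /= /rhoB /pB -/(mB k); lia.
Qed.

Lemma zedge_M_range k j : 2 <= k -> 2 * mB k <= j < 4 * mB k + 1 ->
  2 * mB k <= (zedge k j).1 <= (4 * mB k).+1 /\ 2 * mB k <= (zedge k j).2 <= (4 * mB k).+1.
Proof.
move=> Hk /andP [Hj1 Hj2]; have Hm := mB_gt0 k.
rewrite -(subnKC Hj1) zedge_M //=; last lia.
by have := @Mvtx_range _ (j - 2 * mB k) Hm; have := @Mvtx_range _ (j - 2 * mB k).+1 Hm; lia.
Qed.

Lemma zedge_range k j : 2 <= k -> j < 4 * mB k + 1 ->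
  mB k <= (zedge k j).1 <= (4 * mB k).+1 /\ mB k <= (zedge k j).2 <= (4 * mB k).+1.
Proof.
move=> Hk Hj; case: (ltnP j (2 * mB k)) => [/zedge_chord | Hj2]; first lia.
by have := @zedge_M_range k j Hk; lia.
Qed.

Definition incident (k z j : nat) : bool := ((zedge k j).1 == z) || ((zedge k j).2 == z).

Lemma incident_M k q r : 2 <= k -> q <= 2 * mB k -> r < 2 * mB k + 2 ->
  incident k (Mvtx (mB k) r) (2 * mB k + q) = (q == r) || (q.+1 == r).
Proof. by move=> Hk Hq Hr; rewrite /incident zedge_M //= !eq_Mvtx //; have := mB_gt0 k; lia. Qed.

Lemma svL k L j : 0 < L j -> sv k L j (L j) = inl (zedge k j).2.
Proof. by move=> HL; rewrite /sv /= eqxx; case: eqP => //; lia. Qed.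

Definition edge_profile k L (F : vtx -> nat) j (f : nat -> nat) : Prop :=
  [/\ F (inl (zedge k j).1) = f 0, F (inl (zedge k j).2) = f (L j)
    & forall i, 0 < i < L j -> F (inr (j, i)) = f i].

Lemma sv_profile k L F j f i : edge_profile k L F j f -> i <= L j -> F (sv k L j i) = f i.
Proof.
case=> H0 H1 H2 Hi; rewrite /sv /=.
by case: eqP => [-> // | ?]; case: eqP => [-> // | ?]; apply: H2; lia.
Qed.

Lemma lipschitz_intro k L F :
  (forall u, 1 <= u < mB k ->
     within1 (F (inl u)) (F (inl (2 * u))) /\ within1 (F (inl u)) (F (inl (2 * u).+1))) ->
  (forall j, j < size (zedges k) -> exists2 f, edge_profile k L F j f &
     forall i, i < L j -> within1 (f i) (f i.+1)) ->
  lipschitz (arcG k L) F.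
Proof.
move=> Htree Hedge x y [[u [Hu [-> [-> | ->]]]] | [j [i [Hj [Hi [-> ->]]]]]].
- exact: (Htree u Hu).1.
- exact: (Htree u Hu).2.
- have [f Hf Hstep] := Hedge j Hj.
  by rewrite !(sv_profile Hf) //; [apply: Hstep | lia].
Qed.

Lemma inG_sv k L j i : 2 <= k -> j < size (zedges k) -> i <= L j -> inG k L (sv k L j i).
Proof.
move=> Hk Hj Hi; rewrite size_zedges in Hj; have [R1 R2] := zedge_range Hk Hj.
rewrite /sv /= -/(zedge k j); have := mB_gt0 k.
by case: eqP => ? /=; [|case: eqP => ? /=]; rewrite ?size_zedges ?expn_mB //; lia.
Qed.

(* trunc_log 2 u is the depth of u in B, here capped at the depth k - 2 of the p_i. *)
Definition level k (v : vtx) : nat :=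
  if v is inl u then minn (trunc_log 2 u) (k - 2) else k - 2.

Lemma level_profile k L j : 2 <= k -> j < size (zedges k) ->
  edge_profile k L (level k) j (fun => k - 2).
Proof.
move=> Hk; rewrite size_zedges => /(zedge_range Hk) [R1 R2].
have deep u : mB k <= u -> minn (trunc_log 2 u) (k - 2) = k - 2.
  by move=> Hu; apply/minn_idPr/trunc_log_max.
by split => //=; apply: deep; lia.
Qed.

Lemma lipschitz_level k L : 2 <= k -> lipschitz (arcG k L) (level k).
Proof.
move=> Hk; apply: lipschitz_intro => [u Hu | j Hj]; last first.
  by exists (fun => k - 2); [apply: level_profile | rewrite /within1].
have E0 : trunc_log 2 (2 * u) = (trunc_log 2 u).+1 by rewrite trunc_logMp //; lia.
have E1 : trunc_log 2 (2 * u).+1 = (trunc_log 2 u).+1.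
  by rewrite trunc_log2S ?mul2n /= ?uphalf_double //; lia.
by rewrite /= E0 E1 /within1; lia.
Qed.

Section Potentials.
Variables (k : nat) (L : nat -> nat) (c : nat).
Hypothesis HcL : forall j, j < size (zedges k) -> c <= L j.

(* c minus the distance to z, cut off at 0. *)
Definition cone z (v : vtx) : nat :=
  match v with
  | inl u => if u == z then c else 0
  | inr (j, i) => (if (zedge k j).1 == z then c - i else 0) +
                  (if (zedge k j).2 == z then c - (L j - i) else 0)
  end.

Lemma cone_profile z j : j < size (zedges k) -> edge_profile k L (cone z) j
  (fun i => (if (zedge k j).1 == z then c - i else 0) +
            (if (zedge k j).2 == z then c - (L j - i) else 0)).
Proof.
by move=> /HcL Hc; split=> [||i _] //=; rewrite ?subn0 ?subnn;
  case: eqP; case: eqP; lia.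
Qed.

Lemma lipschitz_cone z : 2 * mB k <= z -> lipschitz (arcG k L) (cone z).
Proof.
move=> Hz; apply: lipschitz_intro => [u Hu | j Hj].
  by rewrite /= !ifF; try (apply/eqP; lia).
eexists; first exact: cone_profile.
by move=> i Hi /=; case: eqP; case: eqP; rewrite /within1; lia.
Qed.

Lemma cone_off z j i : j < size (zedges k) -> i <= L j -> ~~ incident k z j ->
  cone z (sv k L j i) = 0.
Proof.
by move=> Hj Hi; rewrite negb_or => /andP [/negbTE H1 /negbTE H2];
  rewrite (sv_profile (cone_profile z Hj)) // H1 H2.
Qed.

(* min(c, distance to the subdivided path M). *)
Definition plateau (v : vtx) : nat :=
  match v with
  | inl u => if 2 * mB k <= u then 0 else c
  | inr (j, i) => if j < 2 * mB k then minn (L j - i) c else 0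
  end.

Lemma lipschitz_plateau : 2 <= k -> lipschitz (arcG k L) plateau.
Proof.
move=> Hk; apply: lipschitz_intro => [u Hu | j Hj].
  by rewrite /= !ifF /within1; lia.
have Hc := HcL Hj; case: (ltnP j (2 * mB k)) => Hj2.
  have [R1 R2] := zedge_chord Hj2.
  exists (fun i => minn (L j - i) c); last by move=> i Hi; rewrite /within1; lia.
  by split=> [||i _] /=; [rewrite ifF | rewrite ifT | rewrite Hj2]; lia.
have HjM : 2 * mB k <= j < 4 * mB k + 1 by rewrite Hj2 -size_zedges.
have [R1 R2] := zedge_M_range Hk HjM.
exists (fun => 0); last by rewrite /within1.
by split=> [||i _] /=; [rewrite ifT | rewrite ifT | rewrite ifF]; lia.
Qed.

Lemma plateau_M j i : 2 <= k -> 2 * mB k <= j -> j < size (zedges k) ->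
  plateau (sv k L j i) = 0.
Proof.
move=> Hk Hj1 Hj2; have HjM : 2 * mB k <= j < 4 * mB k + 1 by rewrite Hj1 -size_zedges.
have [R1 R2] := zedge_M_range Hk HjM.
rewrite /sv /= -/(zedge k j); case: eqP => _ /=; [|case: eqP => _ /=];
  [rewrite ifT | rewrite ifT | rewrite ifF]; lia.
Qed.

End Potentials.

Definition tent L j0 (v : vtx) : nat :=
  if v is inr (j, i) then (if j == j0 then minn i (L j - i) else 0) else 0.

Lemma lipschitz_tent k L j0 : lipschitz (arcG k L) (tent L j0).
Proof.
apply: lipschitz_intro => [u Hu | j Hj]; first by rewrite /within1.
exists (fun i => if j == j0 then minn i (L j - i) else 0).
  by split=> [||i _] //=; rewrite ?subnn; case: eqP; lia.
by move=> i Hi; case: eqP; rewrite /within1; lia.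
Qed.

Lemma tent_off k L j0 j i : j != j0 -> tent L j0 (sv k L j i) = 0.
Proof. by move=> /negbTE Hj; rewrite /sv /=; case: eqP => // _; case: eqP => //= _; rewrite Hj. Qed.

Definition supported k L (J : pred nat) (P : seq vtx) : Prop :=
  forall v, v \in P -> exists j i, [/\ j < size (zedges k), J j, i <= L j & v = sv k L j i].

Definition st_path_on k L (J : pred nat) (P : seq vtx) : Prop :=
  [/\ is_pathG k L P, path_between (Sset k) (Tset k) P & supported k L J P].

Lemma st_path_on_sub k L (J J' : pred nat) :
  (exists P, st_path_on k L J P) -> (forall j, J j -> J' j) -> exists P, st_path_on k L J' P.
Proof.
move=> [P [HP HB HS]] HJ; exists P; split=> // v /HS [j [i [Hj /HJ HJ' Hi ->]]].
by exists j, i.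
Qed.

Section Chains.
Variables (k : nat) (L : nat -> nat).
Hypothesis Hk : 2 <= k.
Hypothesis HL : forall j, j < size (zedges k) -> 0 < L j.

(* The traversal (j, b) runs along the j-th subdivision path, forwards when b. *)
Definition tsrc (t : nat * bool) : nat := if t.2 then (zedge k t.1).1 else (zedge k t.1).2.
Definition tdst (t : nat * bool) : nat := if t.2 then (zedge k t.1).2 else (zedge k t.1).1.
Definition traversal (t : nat * bool) : seq vtx :=
  [seq sv k L t.1 (if t.2 then i else L t.1 - i) | i <- iota 1 (L t.1)].

Lemma traversal_walk t : t.1 < size (zedges k) ->
  walk (adjG k L) (inl (tsrc t)) (traversal t) /\
  last (inl (tsrc t)) (traversal t) = inl (tdst t).
Proof.
case: t => j b /= Hj; have HLj := HL Hj.
pose o i := if b then i else L j - i.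
have step a n : a + n <= L j ->
    walk (adjG k L) (sv k L j (o a)) [seq sv k L j (o i) | i <- iota a.+1 n] /\
    last (sv k L j (o a)) [seq sv k L j (o i) | i <- iota a.+1 n] = sv k L j (o (a + n)).
  elim: n a => [|n IH] a Ha /=; first by rewrite addn0.
  have Ha' : a.+1 + n <= L j by lia.
  have [W E] := IH a.+1 Ha'.
  rewrite E addSnnS; split=> //; split=> //; rewrite /o; case: b {IH W E o}.
  - by left; right; exists j, a; repeat split; lia.
  - right; right; exists j, (L j - a.+1); repeat split; try lia.
    by rewrite (_ : L j - a = (L j - a.+1).+1) //; lia.
have E0 : sv k L j (o 0) = inl (tsrc (j, b)).
  by rewrite /o /tsrc; case: (b); rewrite /= ?subn0 ?svL.
have EL : sv k L j (o (L j)) = inl (tdst (j, b)).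
  by rewrite /o /tdst; case: (b); rewrite /= ?subnn ?svL.
by rewrite -E0 -EL; have := step 0 (L j) (leqnn _).
Qed.

Fixpoint chain (x : nat) (ts : seq (nat * bool)) : Prop :=
  if ts is t :: ts' then tsrc t = x /\ chain (tdst t) ts' else True.

Definition chain_end (x : nat) (ts : seq (nat * bool)) : nat := last x (map tdst ts).

Lemma chain_cat x s1 s2 : chain x (s1 ++ s2) <-> chain x s1 /\ chain (chain_end x s1) s2.
Proof. by elim: s1 x => [|t s1 IH] x /=; [tauto | rewrite IH; tauto]. Qed.

Lemma chain_end_cat x s1 s2 : chain_end x (s1 ++ s2) = chain_end (chain_end x s1) s2.
Proof. by rewrite /chain_end map_cat last_cat. Qed.

Lemma chain_walk x ts : chain x ts -> (forall t, t \in ts -> t.1 < size (zedges k)) ->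
  walk (adjG k L) (inl x) (flatten (map traversal ts)) /\
  last (inl x) (flatten (map traversal ts)) = inl (chain_end x ts).
Proof.
elim: ts x => [|t ts IH] x //= [<- Hc] Hts.
have [W1 L1] := traversal_walk (Hts t (mem_head _ _)).
have [W2 L2] : walk (adjG k L) (inl (tdst t)) (flatten (map traversal ts)) /\
    last (inl (tdst t)) (flatten (map traversal ts)) = inl (chain_end (tdst t) ts).
  by apply: IH => // t' Ht'; apply: Hts; rewrite inE Ht' orbT.
by rewrite walk_cat last_cat L1.
Qed.

Lemma chain_path (J : pred nat) x ts : chain x ts -> ts != [::] ->
  (forall t, t \in ts -> t.1 < size (zedges k) /\ J t.1) ->
  exists P, [/\ is_pathG k L P, first P = inl x, final P = inl (chain_end x ts)
              & supported k L J P].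
Proof.
move=> Hc Hne Hts.
have Hx : exists j i, [/\ j < size (zedges k), J j, i <= L j & inl x = sv k L j i].
  case: ts Hne Hc Hts => [|t ts] // _ [<- _] /(_ t (mem_head _ _)) [Ht HJ].
  exists t.1, (if t.2 then 0 else L t.1); split=> //; first by case: t.2.
  by rewrite /tsrc; case: t.2; rewrite ?svL //; apply: HL.
have [W Lw] := chain_walk Hc (fun t Ht => (Hts t Ht).1).
have [s [Ws Us Ls Ss]] := walk_shorten W.
have Hsup : supported k L J (inl x :: s).
  move=> v; rewrite inE => /orP [/eqP -> // | /Ss /flattenP [_ /mapP [[j b] Ht ->]]].
  move=> /mapP [i]; rewrite mem_iota /= => Hi ->; have [Hj HJ] := Hts _ Ht.
  by exists j, (if b then i else L j - i); split=> //; case: (b); lia.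
exists (inl x :: s); split=> //; last by rewrite /final /= Ls Lw.
split=> //; split; last by rewrite walkGE.
by move=> v /Hsup [j [i [Hj _ Hi ->]]]; apply: inG_sv.
Qed.

Definition Mrun a n : seq (nat * bool) := [seq (2 * mB k + q, true) | q <- iota a n].

Lemma chain_Mrun a n : a + n <= 2 * mB k + 1 ->
  chain (Mvtx (mB k) a) (Mrun a n) /\
  chain_end (Mvtx (mB k) a) (Mrun a n) = Mvtx (mB k) (a + n).
Proof.
elim: n a => [|n IH] a Ha; first by rewrite addn0.
have Ha' : a.+1 + n <= 2 * mB k + 1 by lia.
have [C E] := IH a.+1 Ha'.
rewrite /chain_end in E *; rewrite /= /tsrc /tdst /= zedge_M //=; last lia.
by rewrite -addSnnS -E.
Qed.

Lemma mem_Mrun a n t : t \in Mrun a n -> exists2 q, a <= q < a + n & t = (2 * mB k + q, true).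
Proof. by move=> /mapP [q]; rewrite mem_iota => Hq ->; exists q. Qed.

Lemma inner_M_path : exists P, st_path_on k L
  (fun j => [&& 2 * mB k <= j, ~~ incident k (s1B k) j & ~~ incident k (t2B k) j]) P.
Proof.
have Hm := mB_gt0 k; have [E0 E1 E2 E3] := Mvtx_ends Hk.
have Hn : 1 + (2 * mB k - 1) <= 2 * mB k + 1 by lia.
have [C Ce] := chain_Mrun Hn.
have Hne : Mrun 1 (2 * mB k - 1) != [::] by rewrite -size_eq0 size_map size_iota; lia.
set J := fun j => [&& 2 * mB k <= j, ~~ incident k (s1B k) j & ~~ incident k (t2B k) j].
have HJ t : t \in Mrun 1 (2 * mB k - 1) -> t.1 < size (zedges k) /\ J t.1.
  move=> /mem_Mrun [q Hq ->]; rewrite /J /= size_zedges -E0 -E3 !incident_M //; lia.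
have [P [HP F1 F2 HS]] := chain_path C Hne HJ.
exists P; split=> //; left; rewrite F1 F2 Ce (_ : 1 + _ = 2 * mB k); last lia.
by rewrite E1 E2 !inE !eqxx !orbT.
Qed.

Lemma detour_path j0 : j0 < mB k -> exists P, st_path_on k L
  (fun j => ~~ incident k (Mvtx (mB k) (2 * j0).+1) j &&
            ~~ incident k (Mvtx (mB k) (2 * j0).+2) j) P.
Proof.
move=> Hj0; have Hm := mB_gt0 k; have [E0 _ _ E3] := Mvtx_ends Hk.
have El : zedge k j0 = (pB k j0.+1, Mvtx (mB k) (2 * j0)) by rewrite zedge_lam ?Mvtx_lam.
have Er : zedge k (mB k + j0) = (pB k j0.+1, Mvtx (mB k) (2 * j0 + 3)).
  by rewrite zedge_rho ?Mvtx_rho.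
have Hp r : r < 2 * mB k + 2 -> (pB k j0.+1 == Mvtx (mB k) r) = false.
  by move=> Hr; have := Mvtx_range Hm Hr; rewrite /pB -/(mB k); case: eqP; lia.
have Hn1 : 0 + 2 * j0 <= 2 * mB k + 1 by lia.
have Hn2 : 2 * j0 + 3 + (2 * mB k - 2 * j0 - 2) <= 2 * mB k + 1 by lia.
have [C1 Ce1] := chain_Mrun Hn1.
have [C2 Ce2] := chain_Mrun Hn2.
set ts := Mrun 0 (2 * j0) ++ [:: (j0, false); (mB k + j0, true)]
          ++ Mrun (2 * j0 + 3) (2 * mB k - 2 * j0 - 2).
have Hc : chain (Mvtx (mB k) 0) ts.
  by rewrite !chain_cat Ce1 /chain_end /= /tsrc /tdst /= El Er add0n; do !split.
have Hne : ts != [::] by rewrite /ts; case: (Mrun _ _).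
set J := fun j =>
  ~~ incident k (Mvtx (mB k) (2 * j0).+1) j && ~~ incident k (Mvtx (mB k) (2 * j0).+2) j.
have HJ t : t \in ts -> t.1 < size (zedges k) /\ J t.1.
  rewrite /J; rewrite !mem_cat !inE size_zedges.
  case/or3P=> [/mem_Mrun [q Hq ->] | /orP [] /eqP -> | /mem_Mrun [q Hq ->]] /=;
    rewrite ?incident_M /incident ?El ?Er /= ?Hp ?eq_Mvtx //; lia.
have [P [HP F1 F2 HS]] := chain_path Hc Hne HJ.
exists P; split=> //; left; rewrite F1 F2 !chain_end_cat Ce1.
rewrite {2}/chain_end /= /tdst /= Er Ce2 (_ : _ + _ = (2 * mB k).+1); last lia.
by rewrite E0 E3 !inE !eqxx !orbT.
Qed.

Lemma avoiding_path z : 2 * mB k <= z <= (4 * mB k).+1 ->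
  exists P, st_path_on k L (fun j => ~~ incident k z j) P.
Proof.
move=> Hz; have Hm := mB_gt0 k; have [E0 _ _ E3] := Mvtx_ends Hk.
have [q Hq <-] := Mvtx_onto Hm Hz.
case: (posnP q) => [-> | Hq0].
  by apply: (st_path_on_sub inner_M_path) => j /and3P []; rewrite E0.
case: (ltnP q (2 * mB k).+1) => Hq1; last first.
  have -> : q = (2 * mB k).+1 by lia.
  by apply: (st_path_on_sub inner_M_path) => j /and3P []; rewrite E3.
have Hq2 := odd_double_half q.-1; set h := q.-1./2 in Hq2.
have Hh : h < mB k by lia.
have [->|->] : q = (2 * h).+1 \/ q = (2 * h).+2 by case: (odd _) Hq2 => /=; lia.
  by apply: (st_path_on_sub (detour_path Hh)) => j /andP [].
by apply: (st_path_on_sub (detour_path Hh)) => j /andP [].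
Qed.

End Chains.

Section Far.
Variables (l k : nat) (L : nat -> nat).
Hypothesis Hkl : 2 * l + 2 < k.
Hypothesis HlL : forall j, j < size (zedges k) -> 2 * l < L j.

Let Hk : 2 <= k. Proof. lia. Qed.
Let HL0 j : j < size (zedges k) -> 0 < L j. Proof. by move/HlL; lia. Qed.

Definition deep_st_path_far_from y P : Prop :=
  [/\ is_pathG k L P, path_between (Sset k) (Tset k) P,
      forall v, v \in P -> level k v = k - 2 & dist_gt k L [:: y] P l].

Lemma potential_far_path J (F : vtx -> nat) y : (exists P, st_path_on k L J P) ->
  lipschitz (arcG k L) F ->
  (forall j i, j < size (zedges k) -> J j -> i <= L j -> F (sv k L j i) = 0) -> l < F y ->
  exists P, deep_st_path_far_from y P.
Proof.
move=> [P [HP HB HS]] HF HF0 Hy; exists P; split=> //.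
  by move=> v /HS [j [i [Hj _ Hi ->]]]; rewrite (sv_profile (level_profile L Hk Hj)).
apply: (lipschitz_dist_gt HF) => w v; rewrite mem_seq1 => /eqP ->.
by move=> /HS [j [i [Hj HJ Hi ->]]]; left; rewrite HF0 ?addn0.
Qed.

Lemma far_from_vertex y : inG k L y -> exists P, deep_st_path_far_from y P.
Proof.
have Hm := mB_gt0 k; set c := (2 * l).+1.
have viaM : l < plateau k L c y -> exists P, deep_st_path_far_from y P.
  apply: (potential_far_path (inner_M_path Hk HL0) (lipschitz_plateau HlL Hk)).
  by move=> j i Hj /and3P [Hj2 _ _] _; apply: plateau_M.
have viaZ z : 2 * mB k <= z <= (4 * mB k).+1 -> l < cone k L c z y ->
    exists P, deep_st_path_far_from y P.
  move=> Hz; apply: (potential_far_path (avoiding_path Hk HL0 Hz) (lipschitz_cone HlL _)).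
    by case/andP: Hz.
  by move=> j i Hj HJ Hi; apply: cone_off.
case: y viaM viaZ => [u | [j0 i0]] viaM viaZ /= Hy.
  case: (ltnP u (2 * mB k)) => Hu; first by apply: viaM; rewrite /= ifF; lia.
  by apply: (viaZ u); rewrite /= ?eqxx -?expn_mB //; lia.
case: Hy => Hj0 Hi0; have HcL := HlL Hj0; case: (ltnP j0 (2 * mB k)) => Hj2.
  have [R1 R2] := zedge_chord Hj2.
  case: (leqP (L j0 - i0) l) => Hd; last by apply: viaM; rewrite /= Hj2; lia.
  by apply: (viaZ (zedge k j0).2); rewrite /= ?eqxx; try case: eqP; lia.
have HjM : 2 * mB k <= j0 < 4 * mB k + 1 by rewrite Hj2 -size_zedges.
have [R1 R2] := zedge_M_range Hk HjM.
case: (leqP i0 l) => Hd1.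
  by apply: (viaZ (zedge k j0).1); rewrite /= ?eqxx; try case: eqP; lia.
case: (leqP (L j0 - i0) l) => Hd2.
  by apply: (viaZ (zedge k j0).2); rewrite /= ?eqxx; try case: eqP; lia.
have Hz : 2 * mB k <= (zedge k j0).1 <= (4 * mB k).+1 by [].
apply: (potential_far_path (avoiding_path Hk HL0 Hz) (@lipschitz_tent k L j0)).
  move=> j i _ HJ _; apply: tent_off; apply: contraNneq HJ => ->.
  by rewrite /incident eqxx.
by rewrite /= eqxx; lia.
Qed.

End Far.

Theorem mainTheorem2 (l k : nat) (L : nat -> nat) :
  1 <= l -> 2 * l + 2 < k ->
  (forall j, j < size (zedges k) -> 2 * l < L j) ->
  forall X : seq vtx, size X <= 2 -> (forall x, x \in X -> inG k L x) ->
  exists P : seq vtx,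
    is_pathG k L P /\ path_between (Sset k) (Tset k) P /\ dist_gt k L X P l.
Proof.
move=> _ Hkl HlL X HX HXin; have Hk : 2 <= k by lia.
have HFlevel := @lipschitz_level k L Hk.
have [Hdeep | /allPn [w0 Hw0 Hshallow]] := boolP (all (fun w => l < level k w) X).
  exists [:: inl rootB]; split; last split.
  - by split=> //; split=> // v; rewrite mem_seq1 => /eqP ->.
  - by left; rewrite !inE eqxx.
  apply: dist_gt_mem => w /(allP Hdeep) Hw; apply: (lipschitz_dist_gt HFlevel) => w' v.
  by rewrite !mem_seq1 => /eqP -> /eqP ->; left; rewrite /= trunc_log1 min0n addn0.
have [y Hy HXy] := size2_subset_pair HX Hw0.
have [P [HP HB Hlevel Hfar]] := far_from_vertex Hkl HlL (HXin y Hy).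
exists P; split=> //; split=> //.
apply: dist_gt_mem => w /HXy; rewrite !inE => /orP [/eqP -> | /eqP -> //].
apply: (lipschitz_dist_gt HFlevel) => w' v; rewrite mem_seq1 => /eqP -> /Hlevel ->.
by right; move: Hshallow; rewrite /= -leqNgt; lia.
Qed.
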